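(* Let $E$ be a regular hermitian $(a,b)$-module of rank $n$. Suppose there exists $\lambda\in\mathbb{C}$ such that $E$ contains two distinct normal sub-$(a,b)$-modules $F\simeq E_f$ and $G\simeq E_g$ of rank one with $f\equiv g\equiv\lambda \pmod{\mathbb{Z}}$. Then there exist normal sub-$(a,b)$-modules $F_1\subset F_{n-1}$ of $E$, of ranks $1$ and $n-1$ respectively, such that the adjoint of $E/F_{n-1}$ is isomorphic to $F_1$ and $F_{n-1}/F_1$ is hermitian.
   Context: An $(a,b)$-module is a free module $E$ of finite rank over $\mathbb{C}[[b]]$ with a $\mathbb{C}$-linear endomorphism $a$ satisfying $ab-ba=b^2$. A sub-$(a,b)$-module is a sub-$\mathbb{C}[[b]]$-module stable by $a$; it is normal if the quotient is free over $\mathbb{C}[[b]]$. $E$ is regular if it embeds into an $(a,b)$-module $E'$ with $aE'\subset bE'$. $E_\lambda$ is the rank-one (elementary) $(a,b)$-module generated by $e_\lambda$ with $ae_\lambda=\lambda be_\lambda$; $\lambda$ is its parameter. The dual $M^*$ of an $(a,b)$-module $M$ is $\mathrm{Hom}_{\mathbb{C}[[b]]}(M,E_0)$ with $(a\cdot\phi)(x)=a\phi(x)-\phi(ax)$; the conjugate $\breve M$ is the set $M$ with $a,b$ replaced by $-a,-b$; the adjoint $\check{M}^*$ is the conjugate of $M^*$. An $(a,b)$-hermitian form on $M$ is a $\mathbb{C}[[b]]$-bilinear $H:M\times\breve M\to E_0$ with $aH(v,w)=H(av,w)+H(v,a_{\breve M}w)$ (where $a_{\breve M}=-a$) and such that $H(v,w)=S(b)e_0$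 implies $H(w,v)=S(-b)e_0$; it is non-degenerate if $y\mapsto H(\cdot,y)$ is an isomorphism $M\to\check{M}^*$. $M$ is hermitian if it admits a non-degenerate hermitian form. *)

From HB Require Import structures.
From mathcomp Require Import all_boot all_order all_algebra.
From mathcomp Require Import Rstruct.
From mathcomp Require Import complex.
Set Implicit Arguments. Unset Strict Implicit. Unset Printing Implicit Defensive.
Import Order.TTheory GRing.Theory Num.Theory.
Local Open Scope ring_scope.

Definition CC : Type := complex Rdefinitions.R.

(* Formal power series C[[b]]: a series is its coefficient sequence.   *)
Definition PS : Type := nat -> CC.

Definition ps0 : PS := fun _ => 0.
Definition pscst (c : CC) : PS := fun k => if k is 0%N then c else 0.
Definition psadd (f g : PS) : PS := fun k => f k + g k.
Definition psopp (f : PS) : PS := fun k => - f k.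
Definition psmul (f g : PS) : PS :=
  fun k => \sum_(i < k.+1) f i * g (k - i)%N.
Definition psb : PS := fun k => (k == 1%N)%:R.
Definition psb2 : PS := psmul psb psb.
Definition psder (f : PS) : PS := fun k => k.+1%:R * f k.+1.
Definition pssig (f : PS) : PS := fun k => (-1) ^+ k * f k.
Definition pssum (n : nat) (F : 'I_n -> PS) : PS :=
  fun k => \sum_(i < n) F i k.

(* An (a,b)-module E of rank n, free over C[[b]] with basis e_0..e_{n-1},
   is determined by the matrix of a in that basis:
      a e_j = sum_i amat i j e_i .
   An element x = sum_j x_j e_j is its coordinate vector; since
   a (S e_j) = S a e_j + b^2 S' e_j (from ab - ba = b^2), we get
      (a x)_i = sum_j amat i j * x_j + b^2 * x_i'.
   Conversely any matrix defines an (a,b)-module this way.            *)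
Record abmod := ABMod { rk : nat ; amat : 'I_rk -> 'I_rk -> PS }.

Definition vec (M : abmod) : Type := 'I_(rk M) -> PS.

Definition vzero (M : abmod) : vec M := fun _ => ps0.
Definition vadd (M : abmod) (x y : vec M) : vec M := fun i => psadd (x i) (y i).
Definition vopp (M : abmod) (x : vec M) : vec M := fun i => psopp (x i).
Definition vscale (M : abmod) (s : PS) (x : vec M) : vec M :=
  fun i => psmul s (x i).
Definition aop (M : abmod) (x : vec M) : vec M :=
  fun i => psadd (pssum (fun j => psmul (amat i j) (x j))) (psmul psb2 (psder (x i))).

Definition linmap (m n : nat) : Type := 'I_m -> 'I_n -> PS.
Definition lapply (m n : nat) (Phi : linmap m n) (x : 'I_n -> PS) : 'I_m -> PS :=
  fun i => pssum (fun j => psmul (Phi i j) (x j)).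

Definition Elem (l : CC) : abmod :=
  @ABMod 1 (fun _ _ => psmul (pscst l) psb).
Definition aE0 (S : PS) : PS := psmul psb2 (psder S).

Definition is_morph (M N : abmod) (Phi : linmap (rk N) (rk M)) : Prop :=
  forall x : vec M, lapply Phi (aop x) = aop (lapply Phi x : vec N).

Definition injective_lin (m n : nat) (Phi : linmap m n) : Prop :=
  forall x : 'I_n -> PS, lapply Phi x = (fun _ => ps0) -> x = (fun _ => ps0).

Definition is_submod (M : abmod) (P : vec M -> Prop) : Prop :=
  [/\ P (@vzero M),
      (forall x y, P x -> P y -> P (vadd x y)),
      (forall s x, P x -> P (vscale s x)) &
      (forall x, P x -> P (aop x))].

Definition sub_rank (M : abmod) (P : vec M -> Prop) (r : nat) : Prop :=
  exists v : 'I_r -> vec M,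
    [/\ (forall i, P (v i)),
        (forall x, P x <-> exists s : 'I_r -> PS,
                      x = (fun k => pssum (fun i => psmul (s i) (v i k)))) &
        (forall s : 'I_r -> PS,
           (fun k => pssum (fun i => psmul (s i) (v i k))) = @vzero M ->
           s = (fun _ => ps0))].

(* P is normal: the quotient M/P is a free C[[b]]-module, i.e. there is a
   surjective C[[b]]-linear map M -> C[[b]]^m with kernel P *)
Definition is_normal (M : abmod) (P : vec M -> Prop) : Prop :=
  exists (m : nat) (Phi : linmap m (rk M)),
    (forall y : 'I_m -> PS, exists x : vec M, lapply Phi x = y) /\
    (forall x : vec M, P x <-> lapply Phi x = (fun _ => ps0)).

Definition sub_iso (N M : abmod) (P : vec M -> Prop) : Prop :=
  exists Phi : linmap (rk M) (rk N),
    [/\ is_morph Phi, injective_lin Phi &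
        (forall y : vec M, P y <-> exists x : vec N, lapply Phi x = y)].

(* For sub-(a,b)-modules P' ⊂ P of M, the quotient P/P' is isomorphic to
   the (a,b)-module Q: there is a C[[b]]-linear map Psi (given on all of M)
   whose restriction to P is a morphism of (a,b)-modules P -> Q which is
   surjective with kernel P'. *)
Definition quot_iso (M : abmod) (P P' : vec M -> Prop) (Q : abmod) : Prop :=
  exists Psi : linmap (rk Q) (rk M),
    [/\ (forall x, P x -> lapply Psi (aop x) = aop (lapply Psi x : vec Q)),
        (forall y : vec Q, exists x, P x /\ lapply Psi x = y) &
        (forall x, P x -> (lapply Psi x = @vzero Q <-> P' x))].

Definition is_regular (M : abmod) : Prop :=
  exists (M' : abmod) (Phi : linmap (rk M') (rk M)),
    [/\ is_morph Phi, injective_lin Phi &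
        (forall x : vec M', exists y : vec M', aop x = vscale psb y)].

(* dual M* = Hom(M, E_0): a functional phi is given by its values
   c_j = phi(e_j); (a.phi)(e_j) = a_{E0}(phi e_j) - phi(a e_j)
                                  = b^2 c_j' - sum_i amat i j c_i,
   so M* is the (a,b)-module with matrix -(amat)^T in the dual basis. *)
Definition dual (M : abmod) : abmod :=
  @ABMod (rk M) (fun j i => psopp (amat i j)).
(* conjugate: same set, a -> -a, b -> -b.  In the same basis the new
   coordinates of x are the S(-b) of the old ones, and
   -a e_j = sum_i (-amat i j)(-b) ._new e_i. *)
Definition conjm (M : abmod) : abmod :=
  @ABMod (rk M) (fun i j => pssig (psopp (amat i j))).
Definition adjoint (M : abmod) : abmod := conjm (dual M).

(* (a,b)-hermitian forms: a C[[b]]-bilinear H : M x M^breve -> E_0 is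
   determined by its matrix h i j = H(e_i, e_j); since S ._breve w = S(-b) w,
      H(x, y) = sum_i sum_j x_i(b) y_j(-b) h i j . *)
Definition hform (M : abmod) (h : 'I_(rk M) -> 'I_(rk M) -> PS)
  (x y : vec M) : PS :=
  pssum (fun i => pssum (fun j => psmul (psmul (x i) (pssig (y j))) (h i j))).

Definition is_herm_form (M : abmod) (h : 'I_(rk M) -> 'I_(rk M) -> PS) : Prop :=
  [/\ (* a H(v,w) = H(av,w) + H(v, a_breve w), a_breve = -a *)
      (forall v w : vec M,
          aE0 (hform h v w) = psadd (hform h (aop v) w) (hform h v (vopp (aop w)))),
      (forall v w : vec M, hform h w v = pssig (hform h v w)) &
      (* non-degenerate: y |-> H(.,y) is bijective onto Hom_{C[[b]]}(M,E_0)
         (a C[[b]]-linear functional is x |-> sum_i x_i c_i) *)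
      (forall c : vec M, exists y : vec M,
          (forall x : vec M, hform h x y = pssum (fun i => psmul (x i) (c i))) /\
          (forall y' : vec M,
             (forall x : vec M, hform h x y' = pssum (fun i => psmul (x i) (c i))) ->
             y' = y))].

Definition is_hermitian (M : abmod) : Prop :=
  exists h, @is_herm_form M h.

From HB Require Import structures.
From mathcomp Require Import all_boot all_order all_algebra.
From mathcomp Require Import Rstruct complex boolp ring.
Set Implicit Arguments. Unset Strict Implicit. Unset Printing Implicit Defensive.
Import Order.TTheory GRing.Theory Num.Theory.
Local Open Scope ring_scope.

(* A rank-one normal submodule isomorphic to [E_f] is [C[[b]] v] for a
   primitive vector [v] with [a v = f b v]. For two such eigenvectors the
   hermitian product satisfies [b d/db H(v, w) = (f + g) H(v, w)], so it is a
   single monomial. Given two distinct such lines with [f = g mod Z], multiply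
   them by powers of [b] to reach a common parameter; then one of them, or a
   combination [v + z w] with [z] a root of a quadratic equation, is isotropic,
   and dividing out [b] gives a primitive isotropic eigenvector [y] (impossible
   in rank one). Non-degeneracy makes [H(., y)] a primitive functional, so
   [F_{n-1} = y^perp] is normal of rank [n - 1] with [E / y^perp = E_{-mu}],
   whose adjoint [E_mu] is [F_1 = C[[b]] y]; and since [y] is isotropic, [H]
   descends to a non-degenerate hermitian form on [y^perp / F_1]. *)

(** * The ring of formal power series *)

HB.instance Definition _ := gen_eqMixin PS.
HB.instance Definition _ := gen_choiceMixin PS.

Lemma psaddA : associative psadd.
Proof. by move=> f g h; apply/funext=> k; apply: addrA. Qed.
Lemma psaddC : commutative psadd.
Proof. by move=> f g; apply/funext=> k; apply: addrC. Qed.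
Lemma ps0add : left_id ps0 psadd.
Proof. by move=> f; apply/funext=> k; apply: add0r. Qed.
Lemma psNadd : left_inverse ps0 psopp psadd.
Proof. by move=> f; apply/funext=> k; apply: addNr. Qed.

HB.instance Definition _ := GRing.isZmodule.Build PS psaddA psaddC ps0add psNadd.

Lemma psD_coef (f g : PS) k : (f + g) k = f k + g k. Proof. by []. Qed.
Lemma psN_coef (f : PS) k : (- f) k = - f k. Proof. by []. Qed.
Lemma ps0_coef k : (0 : PS) k = 0. Proof. by []. Qed.
Lemma psB_coef (f g : PS) k : (f - g) k = f k - g k. Proof. by []. Qed.
Lemma ps_sum_coef n (F : 'I_n -> PS) k : (\sum_(i < n) F i) k = \sum_(i < n) F i k.
Proof.
elim: n F => [|n IH] F; first by rewrite !big_ord0.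
by rewrite !big_ord_recr /= psD_coef IH.
Qed.

(* Coefficients of a product up to degree [N - 1] are those of the product of
   the truncations, which transfers the ring laws from [{poly CC}]. *)
Definition pstrunc (N : nat) (f : PS) : {poly CC} := \poly_(i < N) f i.

Lemma psmul_trunc (f g : PS) N k :
  (k < N)%N -> psmul f g k = (pstrunc N f * pstrunc N g)`_k.
Proof.
move=> kN; rewrite coefM; apply: eq_bigr => i _; rewrite !coef_poly.
have ik : (i < N)%N by apply: leq_ltn_trans kN; rewrite -ltnS.
have kiN : (k - i < N)%N by apply: leq_ltn_trans kN; apply: leq_subr.
by rewrite ik kiN.
Qed.

Lemma coefM_low (p q r : {poly CC}) k :
  (forall i, (i <= k)%N -> p`_i = q`_i) -> (r * p)`_k = (r * q)`_k.
Proof.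
by move=> Epq; rewrite !coefM; apply: eq_bigr => i _; rewrite Epq // leq_subr.
Qed.

Lemma psmulA : associative psmul.
Proof.
move=> f g h; apply/funext=> k.
have low (p q : PS) i : (i <= k)%N ->
    (pstrunc k.+1 (psmul p q))`_i = (pstrunc k.+1 p * pstrunc k.+1 q)`_i.
  by move=> ik; rewrite coef_poly ltnS ik; apply: psmul_trunc; rewrite ltnS.
rewrite !(psmul_trunc _ _ (ltnSn k)) (coefM_low _ (low g h)) [in RHS]mulrC.
by rewrite (coefM_low _ (low f g)) mulrA [in RHS]mulrC.
Qed.

Lemma psmulC : commutative psmul.
Proof. by move=> f g; apply/funext=> k; rewrite !(psmul_trunc _ _ (ltnSn k)) mulrC. Qed.

Lemma ps1mul : left_id (pscst 1) psmul.
Proof.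
move=> f; apply/funext=> k; rewrite /psmul big_ord_recl /= subn0 mul1r.
by rewrite big1 ?addr0 // => i _; rewrite mul0r.
Qed.

Lemma psmulDl : left_distributive psmul psadd.
Proof.
move=> f g h; apply/funext=> k; rewrite /psmul /psadd -big_split /=.
by apply: eq_bigr => i _; rewrite mulrDl.
Qed.

Lemma ps1_neq0 : pscst 1 != 0.
Proof. by apply/eqP => /(congr1 (fun f : PS => f 0%N))/eqP; rewrite oner_eq0. Qed.

HB.instance Definition _ :=
  GRing.Zmodule_isComNzRing.Build PS psmulA psmulC ps1mul psmulDl ps1_neq0.

Lemma psmulE (f g : PS) : psmul f g = f * g. Proof. by []. Qed.
Lemma psaddE (f g : PS) : psadd f g = f + g. Proof. by []. Qed.
Lemma psoppE (f : PS) : psopp f = - f. Proof. by []. Qed.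
Lemma pssumE n (F : 'I_n -> PS) : pssum F = \sum_(i < n) F i.
Proof. by apply/funext=> k; rewrite ps_sum_coef. Qed.
Lemma psM_coef (f g : PS) k : (f * g) k = \sum_(i < k.+1) f i * g (k - i)%N.
Proof. by []. Qed.
Lemma psM_coef0 (f g : PS) : (f * g) 0%N = f 0%N * g 0%N.
Proof. by rewrite psM_coef big_ord1. Qed.
Lemma psb_coef k : psb k = (k == 1%N)%:R. Proof. by []. Qed.

Lemma psbM_coef (f : PS) k : (psb * f) k = if k is k'.+1 then f k' else 0.
Proof.
rewrite psM_coef; case: k => [|k]; first by rewrite big_ord1 psb_coef mul0r.
rewrite big_ord_recl psb_coef mul0r add0r big_ord_recl psb_coef /= mul1r subSS subn0.
by rewrite big1 ?addr0 // => i _; rewrite psb_coef /= mul0r.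
Qed.

Lemma pscstM_coef c (f : PS) k : (pscst c * f) k = c * f k.
Proof.
rewrite psM_coef big_ord_recl /= subn0 big1 ?addr0 // => i _.
by rewrite mul0r.
Qed.

Lemma psbXM_coef n (f : PS) k :
  (psb ^+ n * f) k = if (n <= k)%N then f (k - n)%N else 0.
Proof.
elim: n f k => [|n IH] f k; first by rewrite expr0 mul1r subn0.
rewrite exprSr -mulrA IH psbM_coef.
by case: (ltngtP n k) => [nk|//|<-]; rewrite ?subnn // -(subnSK nk).
Qed.

Lemma psbX_inj n (f g : PS) : psb ^+ n * f = psb ^+ n * g -> f = g.
Proof.
move=> Efg; apply/funext=> k.
by have := congr1 (fun p : PS => p (k + n)%N) Efg; rewrite /= !psbXM_coef leq_addl addnK.
Qed.

Lemma psb_inj (f g : PS) : psb * f = psb * g -> f = g.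
Proof. by rewrite -[psb]expr1; apply: psbX_inj. Qed.

Lemma psb_div (f : PS) : f 0%N = 0 -> f = psb * (fun k => f k.+1).
Proof. by move=> f0; apply/funext=> -[|k]; rewrite psbM_coef. Qed.

Lemma pscstD a b : pscst (a + b) = pscst a + pscst b.
Proof. by apply/funext=> -[|k]; rewrite psD_coef /= ?addr0. Qed.
Lemma pscstN a : pscst (- a) = - pscst a.
Proof. by apply/funext=> -[|k]; rewrite psN_coef /= ?oppr0. Qed.
Lemma pscstB a b : pscst (a - b) = pscst a - pscst b.
Proof. by rewrite pscstD pscstN. Qed.
Lemma pscstM a b : pscst (a * b) = pscst a * pscst b.
Proof. by apply/funext=> k; rewrite pscstM_coef; case: k => [|k] /=; rewrite ?mulr0. Qed.
Lemma pscst0 : pscst 0 = 0.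
Proof. by apply/funext=> -[]. Qed.
Lemma pscst_nat n : pscst n%:R = n%:R.
Proof. by elim: n => [|n IH]; rewrite ?pscst0 // -addn1 !natrD pscstD IH. Qed.

Definition theta (f : PS) : PS := fun k => k%:R * f k.

Lemma psb2_der (f : PS) : psmul psb2 (psder f) = psb * theta f.
Proof.
rewrite /psb2 psmulE -mulrA; congr (_ * _).
by apply/funext=> -[|k]; rewrite psbM_coef /theta ?mul0r.
Qed.

Lemma thetaD (f g : PS) : theta (f + g) = theta f + theta g.
Proof. by apply/funext=> k; rewrite /theta psD_coef mulrDr. Qed.
Lemma theta0 : theta 0 = 0.
Proof. by apply/funext=> k; rewrite /theta ps0_coef mulr0. Qed.
Lemma theta_sum n (F : 'I_n -> PS) : theta (\sum_(i < n) F i) = \sum_(i < n) theta (F i).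
Proof. by elim: n F => [|n IH] F; rewrite ?big_ord0 ?theta0 // !big_ord_recr thetaD IH. Qed.
Lemma theta_cst c : theta (pscst c) = 0.
Proof. by apply/funext=> -[|k]; rewrite /theta /= ?mul0r ?mulr0. Qed.
Lemma thetaM (f g : PS) : theta (f * g) = theta f * g + f * theta g.
Proof.
apply/funext=> k; rewrite /theta psD_coef !psM_coef mulr_sumr -big_split /=.
apply: eq_bigr => i _; have ik : (i <= k)%N by rewrite -ltnS.
by rewrite -{1}(subnKC ik) natrD mulrDl mulrA mulrCA.
Qed.
Lemma theta_b : theta psb = psb.
Proof. by apply/funext=> -[|[|k]]; rewrite /theta psb_coef /= ?mulr0 ?mulr1. Qed.
Lemma theta_bX n : theta (psb ^+ n) = n%:R * psb ^+ n.
Proof.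
elim: n => [|n IH]; first by rewrite expr0 mul0r; apply: theta_cst.
by rewrite exprS thetaM theta_b IH mulrSr; ring.
Qed.

Lemma pssigD (f g : PS) : pssig (f + g) = pssig f + pssig g.
Proof. by apply/funext=> k; rewrite /pssig psD_coef mulrDr. Qed.
Lemma pssigN (f : PS) : pssig (- f) = - pssig f.
Proof. by apply/funext=> k; rewrite /pssig psN_coef mulrN. Qed.
Lemma pssig0 : pssig 0 = 0.
Proof. by apply/funext=> k; rewrite /pssig ps0_coef mulr0. Qed.
Lemma pssig_sum n (F : 'I_n -> PS) : pssig (\sum_(i < n) F i) = \sum_(i < n) pssig (F i).
Proof. by elim: n F => [|n IH] F; rewrite ?big_ord0 ?pssig0 // !big_ord_recr pssigD IH. Qed.
Lemma pssigM (f g : PS) : pssig (f * g) = pssig f * pssig g.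
Proof.
apply/funext=> k; rewrite /pssig !psM_coef mulr_sumr; apply: eq_bigr => i _.
by rewrite mulrACA -exprD subnKC // -ltnS.
Qed.
Lemma pssig_cst c : pssig (pscst c) = pscst c.
Proof. by apply/funext=> -[|k]; rewrite /pssig /= ?mul1r ?mulr0. Qed.
Lemma pssig1 : pssig 1 = 1.
Proof. exact: pssig_cst. Qed.
Lemma pssig_b : pssig psb = - psb.
Proof. by apply/funext=> -[|[|k]]; rewrite /pssig psN_coef psb_coef /= ?mulr0 ?mulr1 ?oppr0. Qed.
Lemma pssigK (f : PS) : pssig (pssig f) = f.
Proof. by apply/funext=> k; rewrite /pssig mulrA -exprMn mulrNN mulr1 expr1n mul1r. Qed.
Lemma pssigX (f : PS) n : pssig (f ^+ n) = pssig f ^+ n.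
Proof. by elim: n => [|n IH]; rewrite ?expr0 ?pssig1 // !exprS pssigM IH. Qed.

(* Coefficients determined recursively by [g * psinv g = 1]; junk unless
   [g 0 != 0]. *)
Fixpoint psinv_seq (g : PS) (k : nat) : seq CC :=
  if k is k'.+1 then
    let s := psinv_seq g k' in
    rcons s (- (g 0%N)^-1 * \sum_(i < k'.+1) g i.+1 * nth 0 s (k' - i)%N)
  else [:: (g 0%N)^-1].

Lemma size_psinv_seq g k : size (psinv_seq g k) = k.+1.
Proof. by elim: k => [|k IH] //=; rewrite size_rcons IH. Qed.

Definition psinv (g : PS) : PS := fun k => nth 0 (psinv_seq g k) k.

Lemma nth_psinv_seq g k i : (i <= k)%N -> nth 0 (psinv_seq g k) i = psinv g i.
Proof.
elim: k => [|k IH]; first by rewrite leqn0 => /eqP ->.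
rewrite leq_eqVlt => /orP [/eqP -> //| ik].
by rewrite /= nth_rcons size_psinv_seq ik IH.
Qed.

Lemma psinvS g k :
  psinv g k.+1 = - (g 0%N)^-1 * \sum_(i < k.+1) g i.+1 * psinv g (k - i)%N.
Proof.
rewrite {1}/psinv /= nth_rcons size_psinv_seq ltnn eqxx; congr (_ * _).
by apply: eq_bigr => i _; rewrite nth_psinv_seq // leq_subr.
Qed.

Lemma psinvP (g : PS) : g 0%N != 0 -> psinv g * g = 1.
Proof.
move=> g0; rewrite mulrC; apply/funext=> -[|k]; rewrite psM_coef.
  by rewrite big_ord1 /psinv /= mulfV.
rewrite big_ord_recl /= subn0 psinvS mulrA mulrN mulfV // mulN1r.
by rewrite (eq_bigr (fun i : 'I_k.+1 => g i.+1 * psinv g (k - i)%N)) ?addNr.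
Qed.

(** * Coordinates, the operator [a] and sesquilinear forms *)

Definition primitive n (x : 'I_n -> PS) : Prop := exists i, x i 0%N != 0.

Definition unitv n (i : 'I_n) : 'I_n -> PS := fun t => (t == i)%:R.

Definition lc n p (z : 'I_p -> PS) (X : 'I_p -> 'I_n -> PS) : 'I_n -> PS :=
  fun t => \sum_k z k * X k t.

Definition pspan n (v x : 'I_n -> PS) : Prop := exists s, x = (fun t => s * v t).

Definition eig (M : abmod) (x : vec M) (mu : CC) : Prop :=
  aop x = (fun t => pscst mu * psb * x t).

Definition hcoef (M : abmod) (h : 'I_(rk M) -> 'I_(rk M) -> PS) (y : vec M) : vec M :=
  fun i => \sum_j pssig (y j) * h i j.

Lemma sum_mul_unitv n (i : 'I_n) (x : 'I_n -> PS) : \sum_t x t * unitv i t = x i.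
Proof.
rewrite (bigD1 i) //= /unitv eqxx mulr1 big1 ?addr0 // => t /negbTE ->.
by rewrite mulr0.
Qed.

Lemma sum_unitv_mul n (i : 'I_n) (x : 'I_n -> PS) : \sum_t unitv i t * x t = x i.
Proof. by rewrite -[RHS](sum_mul_unitv i x); apply: eq_bigr => t _; rewrite mulrC. Qed.

Lemma aopE (M : abmod) (x : vec M) i :
  aop x i = \sum_j amat i j * x j + psb * theta (x i).
Proof. by rewrite /aop psaddE pssumE psb2_der. Qed.

Lemma lapplyE m n (Phi : linmap m n) x i : lapply Phi x i = \sum_j Phi i j * x j.
Proof. by rewrite /lapply pssumE. Qed.

Lemma aopD (M : abmod) (x y : vec M) :
  aop (fun t => x t + y t) = (fun t => aop x t + aop y t).
Proof.
apply/funext=> i; rewrite !aopE thetaD mulrDr addrACA -big_split /=.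
by congr (_ + _); apply: eq_bigr => j _; rewrite mulrDr.
Qed.

Lemma aopZ (M : abmod) (s : PS) (x : vec M) :
  aop (fun t => s * x t) = (fun t => s * aop x t + psb * theta s * x t).
Proof.
apply/funext=> i; rewrite !aopE thetaM !mulrDr mulr_sumr.
rewrite (eq_bigr (fun j => s * (amat i j * x j))) => [|j _]; last by rewrite mulrCA.
ring.
Qed.

Lemma aop_lc (M : abmod) p (z : 'I_p -> PS) (X : 'I_p -> vec M) :
  aop (lc z X) = (fun t => \sum_k (z k * aop (X k) t + psb * theta (z k) * X k t)).
Proof.
apply/funext=> i; rewrite aopE /lc theta_sum mulr_sumr.
have -> : \sum_j amat i j * (\sum_k z k * X k j) =
          \sum_k z k * (\sum_j amat i j * X k j).
  rewrite (eq_bigr (fun j => \sum_k amat i j * (z k * X k j))) => [|j _]; last first.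
    by rewrite mulr_sumr.
  rewrite exchange_big /=; apply: eq_bigr => k _; rewrite mulr_sumr.
  by apply: eq_bigr => j _; rewrite mulrCA.
by rewrite -big_split /=; apply: eq_bigr => k _; rewrite aopE thetaM; ring.
Qed.

Lemma aop_eigZ (M : abmod) (y : vec M) mu s :
  eig y mu -> aop (fun t => s * y t) = (fun t => (s * pscst mu * psb + psb * theta s) * y t).
Proof. by move=> ey; rewrite aopZ ey; apply/funext=> t; ring. Qed.

Lemma lapplyD m n (Phi : linmap m n) (x y : 'I_n -> PS) :
  lapply Phi (fun t => x t + y t) = (fun l => lapply Phi x l + lapply Phi y l).
Proof.
by apply/funext=> l; rewrite !lapplyE -big_split; apply: eq_bigr => t _; rewrite mulrDr.
Qed.

Lemma lapplyZ m n (Phi : linmap m n) s (x : 'I_n -> PS) :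
  lapply Phi (fun t => s * x t) = (fun l => s * lapply Phi x l).
Proof.
by apply/funext=> l; rewrite !lapplyE mulr_sumr; apply: eq_bigr => t _; rewrite mulrCA.
Qed.

Lemma lapply_sum m n (Phi : linmap m n) p (F : 'I_p -> 'I_n -> PS) :
  lapply Phi (fun t => \sum_k F k t) = (fun l => \sum_k lapply Phi (F k) l).
Proof.
apply/funext=> l; rewrite lapplyE.
rewrite (eq_bigr (fun t => \sum_k Phi l t * F k t)) => [|t _]; last by rewrite mulr_sumr.
by rewrite exchange_big /=; apply: eq_bigr => k _; rewrite lapplyE.
Qed.

Lemma lapply_unitv_sub m n (f : 'I_m -> 'I_n) (g : 'I_m -> PS) (j : 'I_n) x k :
  lapply (fun k t => unitv (f k) t - g k * unitv j t) x k = x (f k) - g k * x j.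
Proof.
rewrite lapplyE (eq_bigr (fun t => unitv (f k) t * x t - g k * (unitv j t * x t))).
  by rewrite sumrB -mulr_sumr !sum_unitv_mul.
by move=> t _; rewrite mulrBl mulrA.
Qed.

Section Sesquilinear.
Variables (M : abmod) (h : 'I_(rk M) -> 'I_(rk M) -> PS).

Lemma hformE (x y : vec M) : hform h x y = \sum_i x i * hcoef h y i.
Proof.
rewrite /hform pssumE; apply: eq_bigr => i _; rewrite pssumE /hcoef mulr_sumr.
by apply: eq_bigr => j _; rewrite mulrA.
Qed.

Lemma hformDl (x x' y : vec M) :
  hform h (fun t => x t + x' t) y = hform h x y + hform h x' y.
Proof. by rewrite !hformE -big_split; apply: eq_bigr => i _; rewrite mulrDl. Qed.

Lemma hformZl s (x y : vec M) : hform h (fun t => s * x t) y = s * hform h x y.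
Proof. by rewrite !hformE mulr_sumr; apply: eq_bigr => i _; rewrite mulrA. Qed.

Lemma hcoefZ s (y : vec M) : hcoef h (fun t => s * y t) = (fun i => pssig s * hcoef h y i).
Proof.
by apply/funext=> i; rewrite /hcoef mulr_sumr; apply: eq_bigr => j _; rewrite pssigM mulrA.
Qed.

Lemma hformDr (x y y' : vec M) :
  hform h x (fun t => y t + y' t) = hform h x y + hform h x y'.
Proof.
rewrite !hformE -big_split; apply: eq_bigr => i _; rewrite /= /hcoef -mulrDr -big_split.
by congr (_ * _); apply: eq_bigr => j _; rewrite pssigD mulrDl.
Qed.

Lemma hformZr s (x y : vec M) : hform h x (fun t => s * y t) = pssig s * hform h x y.
Proof.
by rewrite !hformE hcoefZ mulr_sumr; apply: eq_bigr => i _; rewrite mulrCA.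
Qed.

Lemma hform_lcl p (z : 'I_p -> PS) (X : 'I_p -> vec M) (y : vec M) :
  hform h (lc z X) y = \sum_k z k * hform h (X k) y.
Proof.
rewrite hformE (eq_bigr (fun i => \sum_k z k * (X k i * hcoef h y i))) => [|i _].
  by rewrite exchange_big; apply: eq_bigr => k _; rewrite hformE mulr_sumr.
by rewrite mulr_suml; apply: eq_bigr => k _; rewrite mulrA.
Qed.

Lemma hform_lcr q (w : 'I_q -> PS) (Y : 'I_q -> vec M) (x : vec M) :
  hform h x (lc w Y) = \sum_l pssig (w l) * hform h x (Y l).
Proof.
have hcoef_lc i : hcoef h (lc w Y) i = \sum_l pssig (w l) * hcoef h (Y l) i.
  rewrite /hcoef (eq_bigr (fun j => \sum_l pssig (w l) * (pssig (Y l j) * h i j))).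
    by rewrite exchange_big; apply: eq_bigr => l _; rewrite mulr_sumr.
  by move=> j _; rewrite /lc pssig_sum mulr_suml; apply: eq_bigr => l _; rewrite pssigM mulrA.
rewrite hformE (eq_bigr (fun i => \sum_l pssig (w l) * (x i * hcoef h (Y l) i))) => [|i _].
  by rewrite exchange_big; apply: eq_bigr => l _; rewrite hformE mulr_sumr.
by rewrite hcoef_lc mulr_sumr; apply: eq_bigr => l _; rewrite mulrCA.
Qed.

Lemma hform_vopp (x y : vec M) : hform h x (vopp y) = - hform h x y.
Proof.
rewrite (_ : vopp y = fun t => -1 * y t) ?hformZr ?pssigN ?pssig1 ?mulN1r //.
by apply/funext=> t; rewrite /vopp psoppE mulN1r.
Qed.

Lemma hcoef_unitv (y : vec M) i : hform h (unitv i) y = hcoef h y i.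
Proof. by rewrite hformE sum_unitv_mul. Qed.

Lemma is_herm_form_intro :
  (forall x y : vec M, psb * theta (hform h x y) = hform h (aop x) y - hform h x (aop y)) ->
  (forall x y : vec M, hform h y x = pssig (hform h x y)) ->
  (forall c : vec M, exists y, hcoef h y = c) ->
  (forall y1 y2 : vec M, hcoef h y1 = hcoef h y2 -> y1 = y2) ->
  is_herm_form h.
Proof.
move=> Haop Hsym Hsurj Hinj; split=> // [x y|c].
  by rewrite /aE0 psb2_der Haop psaddE hform_vopp.
have [y Hy] := Hsurj c; have rep (y' : vec M) :
    (forall x : vec M, hform h x y' = pssum (fun i => psmul (x i) (c i))) <-> hcoef h y' = c.
  split=> [Hy' | <- x]; last by rewrite hformE pssumE.
  by apply/funext=> i; rewrite -hcoef_unitv Hy' pssumE sum_unitv_mul.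
by exists y; split=> [|y' /rep]; [apply/rep | rewrite -Hy => /Hinj].
Qed.

Lemma hform_lc p q (z : 'I_p -> PS) (X : 'I_p -> vec M) (w : 'I_q -> PS) (Y : 'I_q -> vec M) :
  hform h (lc z X) (lc w Y) = \sum_k \sum_l z k * pssig (w l) * hform h (X k) (Y l).
Proof.
rewrite hform_lcl; apply: eq_bigr => k _; rewrite hform_lcr mulr_sumr.
by apply: eq_bigr => l _; rewrite mulrA.
Qed.

End Sesquilinear.

Section HermitianForm.
Variables (M : abmod) (h : 'I_(rk M) -> 'I_(rk M) -> PS).
Hypothesis Hh : is_herm_form h.

Lemma hform_aop (x y : vec M) :
  psb * theta (hform h x y) = hform h (aop x) y - hform h x (aop y).
Proof.
by case: Hh => HA _ _; rewrite -psb2_der [LHS]HA psaddE hform_vopp.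
Qed.

Lemma hform_sym (x y : vec M) : hform h y x = pssig (hform h x y).
Proof. by case: Hh. Qed.

Lemma hform_aop_eigr (x y : vec M) nu :
  eig y nu -> hform h x (aop y) = - (pscst nu * psb) * hform h x y.
Proof. by move=> ->; rewrite hformZr pssigM pssig_cst pssig_b mulrN. Qed.

Lemma hform_eig (x y : vec M) mu nu : eig x mu -> eig y nu ->
  psb * theta (hform h x y) = pscst (mu + nu) * psb * hform h x y.
Proof.
move=> ex ey; rewrite hform_aop (hform_aop_eigr _ ey) ex hformZl pscstD; ring.
Qed.

(* [H(x, y)] solves [theta S = (mu + nu) S], so it is a single monomial. *)
Lemma hform_eig_coef (x y : vec M) mu nu k : eig x mu -> eig y nu ->
  hform h x y k != 0 -> k%:R = mu + nu.
Proof.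
move=> ex ey; have := hform_eig ex ey; rewrite [_ * psb]mulrC -mulrA => /psb_inj Ek nz.
have /eqP := congr1 (fun f : PS => f k) Ek.
by rewrite pscstM_coef /theta -subr_eq0 -mulrBl mulf_eq0 (negbTE nz) orbF subr_eq0 => /eqP.
Qed.

Lemma hcoef_surj (c : vec M) : exists y : vec M, hcoef h y = c.
Proof.
case: Hh => _ _ /(_ c) [y [Hy _]]; exists y; apply/funext=> i.
by have := Hy (unitv i); rewrite hformE pssumE sum_unitv_mul => ->; rewrite sum_unitv_mul.
Qed.

Lemma hcoef_inj (y1 y2 : vec M) : hcoef h y1 = hcoef h y2 -> y1 = y2.
Proof.
case: Hh => _ _ /(_ (hcoef h y2)) [y [_ Uy]] E12.
have rep (y' : vec M) : hcoef h y' = hcoef h y2 ->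
    forall x : vec M, hform h x y' = pssum (fun i => psmul (x i) (hcoef h y2 i)).
  by move=> <- x; rewrite hformE pssumE.
by rewrite (Uy _ (rep _ E12)) (Uy _ (rep _ erefl)).
Qed.

(* If [H(., y)] had no unit coordinate it would be [b H(., z)] for some [z],
   and [y = - b z] would not be primitive either. *)
Lemma hcoef_primitive (y : vec M) : primitive y -> primitive (hcoef h y).
Proof.
move=> [i yi]; case: (boolP [exists j, hcoef h y j 0%N != 0]) => [/existsP //|].
rewrite negb_exists => /forallP c0.
pose d : vec M := fun j k => hcoef h y j k.+1.
have [z Hz] := hcoef_surj d.
have yz : y = (fun t => - psb * z t).
  apply: hcoef_inj; rewrite hcoefZ Hz pssigN pssig_b opprK; apply/funext=> j.
  by apply: psb_div; apply/eqP; rewrite -[_ == _]negbK c0.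
by move: yi; rewrite yz psM_coef0 psN_coef psb_coef oppr0 mul0r eqxx.
Qed.

End HermitianForm.

(** * Kernels of primitive functionals and spans of primitive vectors *)

Definition kerf n (c x : 'I_n -> PS) : Prop := \sum_i x i * c i = 0.

Lemma kerf0 n (c : 'I_n -> PS) : kerf c (fun _ => 0).
Proof. by rewrite /kerf big1 // => i _; rewrite mul0r. Qed.

Lemma kerfD n (c x x' : 'I_n -> PS) :
  kerf c x -> kerf c x' -> kerf c (fun t => x t + x' t).
Proof.
rewrite /kerf => Hx Hx'.
rewrite (eq_bigr (fun i => x i * c i + x' i * c i)) => [|i _]; last by rewrite mulrDl.
by rewrite big_split /= Hx Hx' addr0.
Qed.

Lemma kerfZ n (c x : 'I_n -> PS) s : kerf c x -> kerf c (fun t => s * x t).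
Proof.
rewrite /kerf => Hx.
by rewrite (eq_bigr (fun i => s * (x i * c i))) -?mulr_sumr ?Hx ?mulr0 // => i _; rewrite mulrA.
Qed.

(* The constant term of [\sum_i x i * c i] vanishes, so a second unit
   coordinate of [x] must compensate the one at [i0]. *)
Lemma kerf_primitive_coord n (c x : 'I_n -> PS) i0 : c i0 0%N != 0 ->
  kerf c x -> primitive x -> exists2 j, j != i0 & x j 0%N != 0.
Proof.
move=> ci0 Hx [i xi].
case: (boolP [exists j, (j != i0) && (x j 0%N != 0)]) => [/existsP [j /andP []]|].
  by exists j.
rewrite negb_exists => /forallP x0.
have x0j j : j != i0 -> x j 0%N = 0 by move=> ji0; have := x0 j; rewrite ji0 negbK => /eqP.
have /eqP := congr1 (fun f : PS => f 0%N) Hx.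
rewrite ps_sum_coef (bigD1 i0) //= big1 => [|j ji0]; last by rewrite psM_coef0 x0j ?mul0r.
rewrite addr0 psM_coef0 mulf_eq0 (negbTE ci0) orbF => /eqP xi0.
by move: xi; have [->|/x0j ->] := eqVneq i i0; rewrite ?xi0 eqxx.
Qed.

Section PrimitiveFunctionalKernel.
Variables (n : nat) (c : 'I_n.+1 -> PS) (i0 : 'I_n.+1).
Hypothesis c_i0 : c i0 0%N != 0.

Definition kerf_basis (j : 'I_n) : 'I_n.+1 -> PS :=
  fun t => unitv (lift i0 j) t - c (lift i0 j) * psinv (c i0) * unitv i0 t.

Let ci_c : psinv (c i0) * c i0 = 1. Proof. exact: psinvP. Qed.

Lemma kerf_basis_lift j j' : kerf_basis j (lift i0 j') = (j' == j)%:R.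
Proof.
rewrite /kerf_basis /unitv (inj_eq (@lift_inj _ i0)).
by rewrite [lift i0 j' == i0]eq_sym (negbTE (neq_lift i0 j')) mulr0 subr0.
Qed.

Lemma lc_kerf_basis_lift (s : 'I_n -> PS) j : lc s kerf_basis (lift i0 j) = s j.
Proof.
rewrite /lc -[RHS](sum_mul_unitv j s); apply: eq_bigr => k _.
by rewrite kerf_basis_lift /unitv eq_sym.
Qed.

Lemma kerf_split (x : 'I_n.+1 -> PS) :
  kerf c x <-> x i0 = - (\sum_j x (lift i0 j) * c (lift i0 j)) * psinv (c i0).
Proof.
rewrite /kerf (bigD1_ord i0) //=; split=> [/eqP|->].
  by rewrite addr_eq0 => /eqP <-; rewrite -mulrA [c i0 * _]mulrC ci_c mulr1.
by rewrite -mulrA ci_c mulr1 addNr.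
Qed.

Lemma kerf_lc (s : 'I_n -> PS) : kerf c (lc s kerf_basis).
Proof.
apply/kerf_split; rewrite (eq_bigr (fun j => s j * c (lift i0 j))) => [|j _]; last first.
  by rewrite lc_kerf_basis_lift.
rewrite /lc mulNr mulr_suml -sumrN; apply: eq_bigr => j _.
rewrite /kerf_basis /unitv eqxx (negbTE (neq_lift i0 j)) /=; ring.
Qed.

Lemma kerf_eq (x x' : 'I_n.+1 -> PS) : kerf c x -> kerf c x' ->
  (forall j, x (lift i0 j) = x' (lift i0 j)) -> x = x'.
Proof.
move=> /kerf_split Hx /kerf_split Hx' E; apply/funext=> t.
case: (unliftP i0 t) => [j ->|->]; first exact: E.
by rewrite Hx Hx'; under eq_bigr do rewrite E.
Qed.

Lemma kerf_lcE (x : 'I_n.+1 -> PS) : kerf c x -> x = lc (fun j => x (lift i0 j)) kerf_basis.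
Proof. by move=> Hx; apply: kerf_eq Hx (kerf_lc _) _ => j; rewrite lc_kerf_basis_lift. Qed.

(* A functional vanishing on [kerf c] is a multiple of [c]: test it on
   [unitv i - c i / c i0 * unitv i0], which lies in [kerf c]. *)
Lemma kerf_functional (e : 'I_n.+1 -> PS) :
  (forall x, kerf c x -> \sum_i x i * e i = 0) -> e = (fun i => e i0 * psinv (c i0) * c i).
Proof.
move=> He; apply/funext=> i.
pose x t := unitv i t - c i * psinv (c i0) * unitv i0 t.
have sum_x (f : 'I_n.+1 -> PS) : \sum_t x t * f t = f i - c i * psinv (c i0) * f i0.
  rewrite /x (eq_bigr (fun t => unitv i t * f t - c i * psinv (c i0) * (unitv i0 t * f t))).
    by rewrite sumrB -mulr_sumr !sum_unitv_mul.
  by move=> t _; rewrite mulrBl mulrA.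
have x_ker : kerf c x by rewrite /kerf sum_x -mulrA ci_c mulr1 subrr.
by have /eqP := He x x_ker; rewrite sum_x subr_eq0 => /eqP ->; ring.
Qed.

Lemma kerf_normal (A : 'I_n.+1 -> 'I_n.+1 -> PS) : is_normal (M := ABMod A) (kerf c).
Proof.
exists 1%N, (fun _ t => c t); split.
- move=> z; exists (fun t => z ord0 * psinv (c i0) * unitv i0 t); apply/funext=> i.
  rewrite (ord1 i) lapplyE (eq_bigr (fun t => z ord0 * psinv (c i0) * (unitv i0 t * c t))).
    by rewrite -mulr_sumr sum_unitv_mul -mulrA ci_c mulr1.
  by move=> t _; ring.
- move=> x; rewrite /kerf; split=> [Hx|/(congr1 (fun f => f ord0))].
    by apply/funext=> i; rewrite lapplyE -[RHS]Hx; apply: eq_bigr => t _; rewrite mulrC.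
  by rewrite /= lapplyE => E; apply: etrans E; apply: eq_bigr => t _; rewrite mulrC.
Qed.

Lemma kerf_rank (A : 'I_n.+1 -> 'I_n.+1 -> PS) : sub_rank (M := ABMod A) (kerf c) n.
Proof.
have lcE s : (fun k => pssum (fun j => psmul (s j) (kerf_basis j k))) = lc s kerf_basis.
  by apply/funext=> t; rewrite pssumE.
exists kerf_basis; split.
- move=> j; rewrite (_ : kerf_basis j = lc (unitv j) kerf_basis); first exact: kerf_lc.
  by apply/funext=> t; rewrite /lc sum_unitv_mul.
- move=> x; split=> [Hx|[s ->]]; last by rewrite lcE; apply: kerf_lc.
  by exists (fun j => x (lift i0 j)); rewrite lcE -kerf_lcE.
- move=> s; rewrite lcE => E; apply/funext=> j.
  by rewrite -(lc_kerf_basis_lift s) E.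
Qed.

End PrimitiveFunctionalKernel.

Section SpanOfPrimitive.
Variables (n : nat) (y : 'I_n.+1 -> PS) (j0 : 'I_n.+1).
Hypothesis y_j0 : y j0 0%N != 0.

Let yi_y : psinv (y j0) * y j0 = 1. Proof. exact: psinvP. Qed.

Lemma pspan_coefI s : s * y j0 = 0 -> s = 0.
Proof. by move=> E; rewrite -[s]mulr1 -yi_y mulrCA E mulr0. Qed.

Definition pspan_quot : linmap n n.+1 :=
  fun j t => unitv (lift j0 j) t - y (lift j0 j) * psinv (y j0) * unitv j0 t.

Lemma pspan_quotE (x : 'I_n.+1 -> PS) j :
  lapply pspan_quot x j = x (lift j0 j) - y (lift j0 j) * psinv (y j0) * x j0.
Proof. exact: lapply_unitv_sub. Qed.

Lemma pspan_normal (A : 'I_n.+1 -> 'I_n.+1 -> PS) : is_normal (M := ABMod A) (pspan y).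
Proof.
exists n, pspan_quot; split.
- move=> z; exists (fun t => if unlift j0 t is Some j then z j else 0).
  by apply/funext=> j; rewrite pspan_quotE liftK unlift_none mulr0 subr0.
- move=> x; split=> [[s ->]|Hx].
    apply/funext=> j; rewrite pspan_quotE.
    have -> : y (lift j0 j) * psinv (y j0) * (s * y j0) = s * y (lift j0 j) * (psinv (y j0) * y j0).
      by ring.
    by rewrite yi_y mulr1 subrr.
  exists (x j0 * psinv (y j0)); apply/funext=> t.
  case: (unliftP j0 t) => [j ->|->]; last by rewrite -mulrA yi_y mulr1.
  by have /eqP := congr1 (fun f => f j) Hx; rewrite /= pspan_quotE subr_eq0 => /eqP ->; ring.
Qed.

Lemma pspan_rank (A : 'I_n.+1 -> 'I_n.+1 -> PS) : sub_rank (M := ABMod A) (pspan y) 1.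
Proof.
exists (fun _ => y); split.
- by move=> _; exists 1; apply/funext=> t; rewrite mul1r.
- move=> x; split=> [[s ->]|[s ->]]; [exists (fun _ => s) | exists (s ord0)];
    by apply/funext=> t; rewrite pssumE big_ord1.
- move=> s /(congr1 (fun f => f j0)); rewrite /= pssumE big_ord1 => /pspan_coefI s0.
  by apply/funext=> i; rewrite ord1.
Qed.

End SpanOfPrimitive.

(** * A primitive isotropic eigenvector *)

Lemma vec_nonzero_coef n (x : 'I_n -> PS) :
  x <> (fun _ => 0) -> exists k, [exists i, x i k != 0].
Proof.
apply: contra_notP => /forallNP x0; apply/funext=> i; apply/funext=> k.
by have /negP := x0 k; rewrite negb_exists => /forallP/(_ i); rewrite negbK => /eqP.
Qed.

Lemma ps_nonzero_coef (f : PS) : f != 0 -> exists k, f k != 0.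
Proof.
move=> /eqP; apply: contra_notP => /forallNP f0; apply/funext=> k.
by apply/eqP; apply: contraT => fk; exfalso; apply: (f0 k).
Qed.

Lemma sub_iso_Elem (M : abmod) f (F : vec M -> Prop) : sub_iso (Elem f) F ->
  exists v : vec M, [/\ eig v f, v <> @vzero M & F = pspan v].
Proof.
move=> [Phi [Pmorph Pinj Pim]]; pose v : vec M := fun t => Phi t ord0.
have Phiv (x : vec (Elem f)) : lapply Phi x = (fun t => x ord0 * v t).
  by apply/funext=> t; rewrite lapplyE big_ord1 mulrC.
have v1 : (fun t => 1 * v t) = v by apply/funext=> t; rewrite mul1r.
exists v; split.
- rewrite /eig; have := Pmorph (fun _ => 1); rewrite !Phiv v1 => <-; apply/funext=> t.
  by rewrite /= aopE big_ord1 mulr1 theta_cst mulr0 addr0.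
- move=> v0; have := Pinj (fun _ => 1); rewrite Phiv v1 v0.
  by move=> /(_ erefl)/(congr1 (fun g => g ord0))/eqP; rewrite oner_eq0.
- apply/funext=> x; apply/propext; rewrite Pim.
  split=> [[x' <-]|[s ->]]; first by exists (x' ord0); rewrite Phiv.
  by exists (fun _ => s); rewrite Phiv.
Qed.

(* If [v = b z], normality puts [z] in [pspan v], so [z = s v] and
   [(1 - b s) v = 0] with [1 - b s] invertible. *)
Lemma normal_pspan_primitive (M : abmod) (v : vec M) :
  v <> @vzero M -> is_normal (pspan v) -> primitive v.
Proof.
move=> v_neq0 [p [Psi [_ Pker]]]; apply: contra_notP v_neq0 => not_prim.
have v0 t : v t 0%N = 0.
  by apply/eqP; apply: contraT => vt; exfalso; apply: not_prim; exists t.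
pose z : vec M := fun t k => v t k.+1.
have vz : v = (fun t => psb * z t) by apply/funext=> t; apply: psb_div.
have /Pker Psi_v : pspan v v by exists 1; apply/funext=> t; rewrite mul1r.
have [s zs] : pspan v z.
  apply/Pker; apply/funext=> k; apply: psb_inj.
  by have := congr1 (fun f => f k) (lapplyZ Psi psb z); rewrite /= -vz Psi_v mulr0 => <-.
have unit_1bs : (1 - psb * s) 0%N != 0.
  by rewrite psB_coef psM_coef0 psb_coef mul0r subr0 oner_eq0.
apply/funext=> t; rewrite -[v t]mul1r -(psinvP unit_1bs) -mulrA.
by rewrite mulrBl mul1r {1}vz /= zs mulrA subrr mulr0.
Qed.

Section IsotropicEigenvector.
Variables (M : abmod) (h : 'I_(rk M) -> 'I_(rk M) -> PS).
Hypothesis Hh : is_herm_form h.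

Lemma eig_bX (x : vec M) f p : eig x f -> eig (fun t => psb ^+ p * x t) (f + p%:R).
Proof. by move=> ex; rewrite /eig aopZ ex theta_bX pscstD pscst_nat; apply/funext=> t; ring. Qed.

Lemma hform_bX_eq0 (x : vec M) p :
  (hform h (fun t => psb ^+ p * x t) (fun t => psb ^+ p * x t) == 0) = (hform h x x == 0).
Proof.
rewrite hformZl hformZr pssigX pssig_b exprNn.
apply/eqP/eqP => [|->]; last by rewrite !mulr0.
move=> H0; have : psb ^+ p * (psb ^+ p * ((-1) ^+ p * hform h x x)) = psb ^+ p * (psb ^+ p * 0).
  by rewrite !mulr0 -H0; ring.
move=> /psbX_inj/psbX_inj/(congr1 (fun f => (-1) ^+ p * f)).
by rewrite mulr0 mulrA -exprMn mulrNN mulr1 expr1n mul1r.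
Qed.

(* Dividing a nonzero isotropic eigenvector by the largest power of [b]
   dividing it. *)
Lemma primitive_part (u : vec M) mu : u <> @vzero M -> eig u mu -> hform h u u = 0 ->
  exists (y : vec M) mu', [/\ primitive y, eig y mu' & hform h y y = 0].
Proof.
move=> /vec_nonzero_coef exP eu Huu.
case: (ex_minnP exP) => k0 /existsP [i0 nz0] kmin.
pose y : vec M := fun i k => u i (k + k0)%N.
have uy : u = (fun t => psb ^+ k0 * y t).
  apply/funext=> i; apply/funext=> j; rewrite psbXM_coef.
  case: ifP => k0j; first by rewrite /y subnK.
  apply/eqP; apply: contraFT k0j => uij; apply: kmin; apply/existsP; exists i.
  by rewrite uij.
exists y, (mu - k0%:R); split.
- by exists i0; rewrite /y add0n.
- rewrite /eig; apply/funext=> i; apply: (@psbX_inj k0).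
  have := congr1 (fun f => f i) eu; rewrite uy aopZ theta_bX /= => E.
  apply: (addIr (psb * (k0%:R * psb ^+ k0) * y i)); rewrite E pscstB pscst_nat; ring.
- by apply/eqP; rewrite -(hform_bX_eq0 _ k0) -uy Huu.
Qed.

Lemma eig_add_cst (X Z : vec M) mu z :
  eig X mu -> eig Z mu -> eig (fun t => X t + pscst z * Z t) mu.
Proof.
by move=> eX eZ; rewrite /eig aopD aopZ eX eZ theta_cst; apply/funext=> t /=; ring.
Qed.

Lemma quad_root (A B C : CC) : C != 0 -> exists z : CC, A + z * B + z ^+ 2 * C = 0.
Proof.
move=> C0; pose r := sqrtC (B ^+ 2 - 4 * A * C).
have r2 : r ^+ 2 = B ^+ 2 - 4 * A * C by apply: sqrtCK.
exists ((r - B) / (2 * C)); have n2 : (2 : CC) != 0 by rewrite pnatr_eq0.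
apply/eqP; rewrite -(mulIr_eq0 _ (mulIf (mulf_neq0 (mulf_neq0 n2 n2) C0))).
have -> : (A + (r - B) / (2 * C) * B + ((r - B) / (2 * C)) ^+ 2 * C) * (2 * 2 * C) =
          (r ^+ 2 - B ^+ 2 + 4 * A * C) * (C / C) by field.
by rewrite r2; apply/eqP; ring.
Qed.

(* [H(u, u)] for [u = X + z Z] is a single monomial (of degree [2 mu]) whose
   coefficient is quadratic in [z], nondegenerate because [H(Z, Z) <> 0]. *)
Lemma isotropic_combination (X Z : vec M) mu : eig X mu -> eig Z mu ->
  hform h Z Z != 0 -> exists z : CC,
  hform h (fun t => X t + pscst z * Z t) (fun t => X t + pscst z * Z t) = 0.
Proof.
move=> eX eZ /ps_nonzero_coef [k0 Hk0].
have [z Hz] := quad_root (hform h X X k0) (hform h X Z k0 + hform h Z X k0) Hk0.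
exists z; set u := fun t => X t + pscst z * Z t.
have eu : eig u mu by apply: eig_add_cst.
have Huu : hform h u u = pscst z ^+ 2 * hform h Z Z +
    pscst z * (hform h X Z + hform h Z X) + hform h X X.
  by rewrite /u hformDl !hformDr !hformZr !hformZl pssig_cst; ring.
apply/funext=> k; rewrite ps0_coef; apply/eqP; apply: contraT => nzk.
have /eqP : k%:R = k0%:R :> CC.
  by rewrite (hform_eig_coef Hh eu eu nzk) (hform_eig_coef Hh eZ eZ Hk0).
rewrite eqr_nat => /eqP kk0; move: nzk.
rewrite kk0 Huu !psD_coef expr2 -pscstM !pscstM_coef psD_coef -Hz.
by rewrite -expr2 addrC [_ + (_ * _)]addrC addrA eqxx.
Qed.

Lemma combination_neq0 (v w : vec M) p q (z : CC) :
  primitive v -> primitive w -> (p = 0 \/ q = 0)%N -> ~ (forall x, pspan v x <-> pspan w x) ->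
  (fun t => psb ^+ p * v t + pscst z * (psb ^+ q * w t)) <> @vzero M.
Proof.
move=> [i vi] [j wj] pq0 vw u0.
have ucoef t k : (psb ^+ p * v t) k + z * (psb ^+ q * w t) k = 0.
  by have := congr1 (fun f => f t k) u0; rewrite /= psD_coef pscstM_coef.
clear u0; have [z0|zn0] := eqVneq z 0.
  by move: vi; have := ucoef i p; rewrite z0 mul0r addr0 psbXM_coef leqnn subnn => ->; rewrite eqxx.
case: p q pq0 ucoef => [|p] [|q] pq0 ucoef.
- have vzw : v = (fun t => pscst (- z) * w t).
    apply/funext=> t; apply/funext=> k; apply/eqP.
    by rewrite pscstM_coef mulNr -addr_eq0; have := ucoef t k; rewrite !expr0 !mul1r => ->.
  have wzv : w = (fun t => pscst (- z^-1) * v t).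
    apply/funext=> t; rewrite vzw mulrA -pscstM mulrNN mulVf // -[in LHS](mul1r (w t)).
    by [].
  apply: vw => x; split=> [[s ->]|[s ->]].
    by exists (s * pscst (- z)); rewrite vzw; apply/funext=> t; rewrite mulrA.
  by exists (s * pscst (- z^-1)); rewrite wzv; apply/funext=> t; rewrite mulrA.
- move: vi; have := ucoef i 0%N; rewrite expr0 mul1r psbXM_coef /= mulr0 addr0 => ->.
  by rewrite eqxx.
- move: wj; have /eqP := ucoef j 0%N; rewrite expr0 mul1r psbXM_coef /= add0r mulf_eq0.
  by rewrite (negbTE zn0) => /eqP ->; rewrite eqxx.
- by case: pq0.
Qed.

Lemma isotropic_eigvec f g (d : int) (F G : vec M -> Prop) :
  is_normal F -> sub_iso (Elem f) F -> is_normal G -> sub_iso (Elem g) G ->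
  f = g + d%:~R -> ~ (forall x, F x <-> G x) ->
  exists (y : vec M) mu, [/\ primitive y, eig y mu & hform h y y = 0].
Proof.
move=> nF /sub_iso_Elem [v [ev v0 Fv]] nG /sub_iso_Elem [w [ew w0 Gw]] fgd.
rewrite Fv Gw in nF nG * => FG.
have vprim := normal_pspan_primitive v0 nF; have wprim := normal_pspan_primitive w0 nG.
have [Hvv|Hvv] := eqVneq (hform h v v) 0; first by exists v, f.
have [Hww|Hww] := eqVneq (hform h w w) 0; first by exists w, g.
suff [p [q [fpq pq0]]] : exists p q : nat, f + p%:R = g + q%:R /\ (p = 0 \/ q = 0)%N.
  have eX := eig_bX p ev; have eZ := eig_bX q ew; rewrite -fpq in eZ.
  have HZZ : hform h (fun t => psb ^+ q * w t) (fun t => psb ^+ q * w t) != 0.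
    by rewrite hform_bX_eq0.
  have [z Hz] := isotropic_combination eX eZ HZZ.
  apply: (primitive_part (u := fun t => psb ^+ p * v t + pscst z * (psb ^+ q * w t))
                         (mu := f + p%:R)) Hz; first exact: combination_neq0.
  exact: (eig_add_cst z eX eZ).
case: d fgd => p fgd; [exists 0%N, p | exists p.+1, 0%N]; split; auto.
  by rewrite fgd addr0.
by rewrite fgd addr0 -addrA addNr addr0.
Qed.

End IsotropicEigenvector.

(** * The flag of a primitive isotropic eigenvector *)

Lemma isotropic_unit_coord (M : abmod) h (y : vec M) i0 : is_herm_form h ->
  primitive y -> hform h y y = 0 -> hcoef h y i0 0%N != 0 ->
  exists2 j, j != i0 & y j 0%N != 0.
Proof.
by move=> Hh yprim yiso ci0; apply: kerf_primitive_coord ci0 _ yprim; rewrite /kerf -hformE.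
Qed.

Lemma rank1_anisotropic (A : 'I_1 -> 'I_1 -> PS) h (y : 'I_1 -> PS) :
  @is_herm_form (ABMod A) h -> primitive y -> @hform (ABMod A) h y y <> 0.
Proof.
move=> Hh yprim yiso; have [i0 ci0] := hcoef_primitive Hh yprim.
by have [j] := isotropic_unit_coord Hh yprim yiso ci0; rewrite (ord1 j) (ord1 i0) eqxx.
Qed.

Section IsotropicFlag.
Variables (m : nat) (A : 'I_m.+2 -> 'I_m.+2 -> PS).
Local Notation E := (ABMod A).
Variables (h : 'I_(rk E) -> 'I_(rk E) -> PS) (y : vec E) (mu : CC).
Local Notation H := (@hform E h).
Hypotheses (Hh : @is_herm_form E h) (y_prim : primitive y) (ey : @eig E y mu)
  (y_iso : H y y = 0).

Let c : 'I_m.+2 -> PS := @hcoef E h y.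

Let hform_y (x : vec E) : H x y = \sum_i x i * c i.
Proof. exact: hformE. Qed.

Let i0 : 'I_m.+2 := odflt ord0 [pick i | c i 0%N != 0].

Let c_i0 : c i0 0%N != 0.
Proof.
rewrite /i0; case: pickP => [i //|c0]; have [i ci] := hcoef_primitive Hh y_prim.
by move: ci; rewrite /c c0.
Qed.

Let j1 : 'I_m.+1 := odflt ord0 [pick j | y (lift i0 j) 0%N != 0].
Let j0 := lift i0 j1.

Let y_j0 : y j0 0%N != 0.
Proof.
rewrite /j0 /j1; case: pickP => [j //|y0].
have [j ji0 yj] := isotropic_unit_coord Hh y_prim y_iso c_i0.
by case: (unliftP i0 j) ji0 yj => [k -> _|-> /eqP //]; rewrite y0.
Qed.

Let yi_y : psinv (y j0) * y j0 = 1. Proof. exact: psinvP. Qed.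

Lemma kerf_aop (x : vec E) : kerf c x -> kerf c (aop x).
Proof.
rewrite /kerf -!hform_y => Hx.
by have := hform_aop Hh x y; rewrite (hform_aop_eigr h x ey) Hx theta0 !mulr0 subr0 => ->.
Qed.

Lemma kerf_submod : is_submod (M := E) (kerf c).
Proof. by split; [apply: kerf0 | apply: kerfD | move=> s x; apply: kerfZ | apply: kerf_aop]. Qed.

Lemma y_kerf : kerf c y.
Proof. by rewrite /kerf -hform_y. Qed.

Lemma pspan_submod : is_submod (M := E) (pspan y).
Proof.
split.
- by exists 0; apply/funext=> t; rewrite mul0r.
- by move=> _ _ [s ->] [s' ->]; exists (s + s'); apply/funext=> t; rewrite /vadd psaddE mulrDl.
- by move=> s _ [s' ->]; exists (s * s'); apply/funext=> t; rewrite /vscale psmulE mulrA.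
- by move=> _ [s ->]; rewrite (aop_eigZ _ ey); eexists.
Qed.

Lemma pspan_sub_kerf (x : vec E) : pspan y x -> kerf c x.
Proof. by move=> [s ->]; apply: kerfZ y_kerf. Qed.

Lemma quot_kerf : quot_iso (M := E) (fun _ => True) (kerf c) (Elem (- mu)).
Proof.
have Hc (x : vec E) j : lapply (fun (_ : 'I_1) t => c t) x j = H x y.
  by rewrite lapplyE hform_y; apply: eq_bigr => t _; rewrite mulrC.
exists (fun _ t => c t); split.
- move=> x _; apply/funext=> i; rewrite aopE big_ord1 !Hc /= psmulE pscstN.
  by have := hform_aop Hh x y; rewrite (hform_aop_eigr h x ey) => ->; ring.
- move=> z; exists (fun t => z ord0 * psinv (c i0) * unitv i0 t); split=> //.
  apply/funext=> i; rewrite Hc hformZl hcoef_unitv -mulrA psinvP // mulr1.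
  by rewrite (ord1 i).
- move=> x _; rewrite /kerf -hform_y; split=> [/(congr1 (fun f => f ord0))|Hx].
    by rewrite /= Hc.
  by apply/funext=> i; rewrite Hc.
Qed.

Lemma adjoint_sub_iso : sub_iso (M := E) (adjoint (Elem (- mu))) (pspan y).
Proof.
have Phi_x (x : vec (adjoint (Elem (- mu)))) :
    lapply (fun t (_ : 'I_1) => y t) x = (fun t => x ord0 * y t).
  by apply/funext=> t; rewrite lapplyE big_ord1 mulrC.
exists (fun t _ => y t); split.
- move=> x; rewrite !Phi_x (aop_eigZ _ ey); apply/funext=> t.
  rewrite aopE big_ord1 /= !psoppE opprK psmulE pssigM pssig_cst pssig_b pscstN; ring.
- move=> x /(congr1 (fun f => f j0)); rewrite Phi_x => /pspan_coefI s0.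
  by apply/funext=> i; rewrite (ord1 i) s0.
- move=> z; split=> [[s ->]|[x <-]]; last by rewrite Phi_x; exists (x ord0).
  by exists (fun _ => s); rewrite Phi_x.
Qed.

(* [kerf c] is coordinatised by the coordinates off [i0], and its quotient
   by [pspan y] by those off [i0] and [j0], listed by [sg]. [Psi] is the
   projection along [y] and [L] its section vanishing at [j0]. *)
Let sg (k : 'I_m) : 'I_m.+2 := lift i0 (lift j1 k).
Let ext (z : 'I_m -> PS) (j : 'I_m.+1) : PS := if unlift j1 j is Some k then z k else 0.
Let L (z : 'I_m -> PS) : vec E := lc (ext z) (kerf_basis c i0).
Let Lb (k : 'I_m) : vec E := kerf_basis c i0 (lift j1 k).
Let Psi : linmap m m.+2 :=
  fun k t => unitv (sg k) t - y (sg k) * psinv (y j0) * unitv j0 t.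

Let PsiE (x : vec E) k : lapply Psi x k = x (sg k) - y (sg k) * psinv (y j0) * x j0.
Proof. exact: lapply_unitv_sub. Qed.

Let L_lc z : L z = lc z Lb.
Proof.
apply/funext=> t; rewrite /L /lc (bigD1_ord j1) //= /ext unlift_none mul0r add0r.
by apply: eq_bigr => k _; rewrite liftK.
Qed.

Let L_j0 z : L z j0 = 0.
Proof. by rewrite /L lc_kerf_basis_lift /ext unlift_none. Qed.

Let L_sg z k : L z (sg k) = z k.
Proof. by rewrite /L lc_kerf_basis_lift /ext liftK. Qed.

Let L_kerf z : kerf c (L z).
Proof. exact: kerf_lc. Qed.

Lemma Psi_L z : lapply Psi (L z) = z.
Proof. by apply/funext=> k; rewrite PsiE L_sg L_j0 mulr0 subr0. Qed.

Lemma Psi_pspan s : lapply Psi (fun t => s * y t) = (fun _ => 0).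
Proof.
apply/funext=> k; rewrite PsiE.
have -> : y (sg k) * psinv (y j0) * (s * y j0) = s * y (sg k) * (psinv (y j0) * y j0) by ring.
by rewrite yi_y mulr1 subrr.
Qed.

Lemma kerf_decomp (x : vec E) : kerf c x ->
  x = (fun t => L (lapply Psi x) t + x j0 * psinv (y j0) * y t).
Proof.
move=> Hx; apply: (kerf_eq c_i0 Hx); first by apply: kerfD; [apply: L_kerf | apply: kerfZ y_kerf].
move=> j; case: (unliftP j1 j) => [k ->|->]; last by rewrite L_j0 add0r -mulrA yi_y mulr1.
by rewrite L_sg PsiE; ring.
Qed.

Let A' : 'I_m -> 'I_m -> PS := fun l k => lapply Psi (aop (Lb k)) l.
Local Notation Q := (ABMod A').

Let Psi_Lb k : lapply Psi (Lb k) = unitv k.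
Proof.
rewrite -[RHS](Psi_L (unitv k)) L_lc; congr lapply; apply/funext=> t.
by rewrite /lc sum_unitv_mul.
Qed.

Lemma Psi_morph (x : vec E) : kerf c x -> lapply Psi (aop x) = @aop Q (lapply Psi x).
Proof.
move=> Hx; rewrite {1}(kerf_decomp Hx) aopD (aop_eigZ _ ey) lapplyD Psi_pspan.
set z := lapply Psi x; rewrite L_lc aop_lc lapply_sum; apply/funext=> l.
rewrite aopE /= addr0.
rewrite (eq_bigr (fun k => A' l k * z k + psb * theta (z k) * unitv l k)) => [|k _].
  by rewrite big_split sum_mul_unitv.
by rewrite lapplyD !lapplyZ Psi_Lb /= [z k * _]mulrC /unitv eq_sym.
Qed.

Lemma quot_kerf_pspan : quot_iso (M := E) (kerf c) (pspan y) Q.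
Proof.
exists Psi; split; first exact: Psi_morph.
  by move=> z; exists (L z); split; [apply: L_kerf | apply: Psi_L].
move=> x Hx; split=> [Psi0|[s ->]]; last exact: Psi_pspan.
exists (x j0 * psinv (y j0)); rewrite {1}(kerf_decomp Hx) Psi0; apply/funext=> t.
by rewrite L_lc /lc big1 ?add0r // => k _; rewrite mul0r.
Qed.

Let h' : 'I_m -> 'I_m -> PS := fun k l => H (Lb k) (Lb l).
Local Notation H' := (@hform Q h').
Local Notation hcoefQ := (@hcoef Q h').

Let hform_L z w : H' z w = H (L z) (L w).
Proof.
rewrite !L_lc hform_lc /hform pssumE; apply: eq_bigr => k _.
by rewrite pssumE; apply: eq_bigr => l _; rewrite !psmulE.
Qed.

Let hform_L_y z : H (L z) y = 0.
Proof. by rewrite hform_y; apply: L_kerf. Qed.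

Let hform_y_L z : H y (L z) = 0.
Proof. by rewrite (hform_sym Hh) hform_L_y pssig0. Qed.

Let L_aop z : exists a, L (@aop Q z) = (fun t => aop (L z) t + a * y t).
Proof.
have /kerf_decomp Lz := kerf_aop (L_kerf z); rewrite Psi_morph // Psi_L in Lz.
set a := aop (L z) j0 * psinv (y j0) in Lz.
by exists (- a); apply/funext=> t; rewrite Lz /=; ring.
Qed.

Lemma quot_hform_aop z w : psb * theta (H' z w) = H' (aop z) w - H' z (aop w).
Proof.
rewrite !hform_L; have [a1 ->] := L_aop z; have [a2 ->] := L_aop w.
by rewrite hformDl hformDr hformZl hformZr hform_y_L hform_L_y !mulr0 !addr0 (hform_aop Hh).
Qed.

(* A vector of [kerf c] orthogonal to the image of [L] is orthogonal to all of
   [kerf c], so [H(., D)] is a multiple of [c = H(., y)]. *)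
Lemma orth_L_pspan (D : vec E) : kerf c D -> (forall z, H (L z) D = 0) -> pspan y D.
Proof.
move=> HD HLD; have yD : H y D = 0 by rewrite (hform_sym Hh) hform_y HD pssig0.
have /(kerf_functional c_i0) e_c : forall x, kerf c x -> \sum_i x i * hcoef h D i = 0.
  move=> x Hx; rewrite -(hformE (M := E)) (kerf_decomp Hx) hformDl hformZl HLD yD.
  by rewrite mulr0 addr0.
exists (pssig (hcoef h D i0 * psinv (c i0))); apply: (hcoef_inj Hh).
by rewrite hcoefZ pssigK {1}e_c.
Qed.

Lemma quot_hcoef_inj (w1 w2 : vec Q) : hcoefQ w1 = hcoefQ w2 -> w1 = w2.
Proof.
move=> E12; pose D : vec E := fun t => L w1 t + -1 * L w2 t.
have kD : kerf c D by apply: kerfD; [apply: L_kerf | apply: kerfZ; apply: L_kerf].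
have oD z : H (L z) D = 0.
  by rewrite hformDr hformZr pssigN pssig1 -!hform_L !hformE E12 mulN1r subrr.
have [s Ds] := orth_L_pspan kD oD.
have := congr1 (lapply Psi) Ds; rewrite Psi_pspan /D lapplyD lapplyZ !Psi_L.
move=> E; apply/funext=> k; have /= := congr1 (fun f => f k) E.
by rewrite mulN1r => /eqP; rewrite subr_eq0 => /eqP.
Qed.

Lemma quot_hform_sym z w : H' w z = pssig (H' z w).
Proof. by rewrite !hform_L (hform_sym Hh). Qed.

(* [d] is represented in [Q] by the image of the vector representing the
   functional [x |-> \sum_k d k * (Psi x) k] of [E]. *)
Lemma quot_hcoef_surj (d : vec Q) : exists w, hcoefQ w = d.
Proof.
have [w' Hw'] := hcoef_surj Hh (lc d Psi).
have Hxw' (x : vec E) : H x w' = \sum_k d k * lapply Psi x k.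
  rewrite hformE Hw' /lc (eq_bigr (fun t => \sum_k d k * (Psi k t * x t))) => [|t _].
    by rewrite exchange_big; apply: eq_bigr => k _; rewrite lapplyE mulr_sumr.
  by rewrite mulr_sumr; apply: eq_bigr => k _; ring.
have kw' : kerf c w'.
  rewrite /kerf -hform_y (hform_sym Hh) Hxw' big1 ?pssig0 // => k _.
  have := congr1 (fun f => f k) (Psi_pspan 1); rewrite /=.
  by under eq_fun do rewrite mul1r; move=> ->; rewrite mulr0.
have Lw' z : H (L z) (L (lapply Psi w')) = H (L z) w'.
  by rewrite {2}(kerf_decomp kw') hformDr hformZr hform_L_y mulr0 addr0.
exists (lapply Psi w'); apply/funext=> k.
by rewrite -hcoef_unitv hform_L Lw' Hxw' Psi_L sum_mul_unitv.
Qed.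

Lemma quot_hermitian : is_hermitian Q.
Proof.
exists h'; apply: is_herm_form_intro.
- exact: quot_hform_aop.
- exact: quot_hform_sym.
- exact: quot_hcoef_surj.
- exact: quot_hcoef_inj.
Qed.

Lemma isotropic_flag : exists F1 Fn1 : vec E -> Prop,
  [/\ is_submod F1 /\ is_normal F1 /\ sub_rank F1 1,
      is_submod Fn1 /\ is_normal Fn1 /\ sub_rank Fn1 (m.+2 - 1),
      (forall x, F1 x -> Fn1 x),
      (exists Q : abmod, quot_iso (fun _ => True) Fn1 Q /\ sub_iso (adjoint Q) F1) &
      (exists Q' : abmod, quot_iso Fn1 F1 Q' /\ is_hermitian Q')].
Proof.
exists (pspan y), (kerf c); split.
- by split; [apply: pspan_submod | split; [apply: (pspan_normal y_j0) | apply: (pspan_rank y_j0)]].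
- by split; [apply: kerf_submod | split; [apply: (kerf_normal c_i0) | apply: (kerf_rank c_i0)]].
- exact: pspan_sub_kerf.
- by exists (Elem (- mu)); split; [apply: quot_kerf | apply: adjoint_sub_iso].
- by exists Q; split; [apply: quot_kerf_pspan | apply: quot_hermitian].
Qed.

End IsotropicFlag.

Unset Implicit Arguments.

Theorem mainTheorem3 (n : nat) (E : abmod) :
  rk E = n ->
  is_regular E ->
  is_hermitian E ->
  (exists (lambda f g : CC) (F G : vec E -> Prop),
      [/\ exists k : int, f = lambda + k%:~R,
          exists k : int, g = lambda + k%:~R,
          is_submod F /\ is_normal F /\ sub_rank F 1 /\ sub_iso (Elem f) F,
          is_submod G /\ is_normal G /\ sub_rank G 1 /\ sub_iso (Elem g) G &
          ~ (forall x, F x <-> G x)]) ->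
  exists F1 Fn1 : vec E -> Prop,
    [/\ is_submod F1 /\ is_normal F1 /\ sub_rank F1 1,
        is_submod Fn1 /\ is_normal Fn1 /\ sub_rank Fn1 (n - 1),
        (forall x, F1 x -> Fn1 x),
        (exists Q : abmod,
            quot_iso (fun _ => True) Fn1 Q /\ sub_iso (adjoint Q) F1) &
        (exists Q' : abmod, quot_iso Fn1 F1 Q' /\ is_hermitian Q')].
Proof.
move=> <- _ [h Hh] [lambda [f [g [F [G [[k1 ->] [k2 ->]]]]]]].
move=> [_ [nF [_ isoF]]] [_ [nG [_ isoG]]] FG.
have fg : lambda + k1%:~R = lambda + k2%:~R + (k1 - k2)%:~R :> CC by rewrite intrB; ring.
have [y [mu [y_prim ey y_iso]]] := isotropic_eigvec Hh nF isoF nG isoG fg FG.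
case: E h Hh y y_prim ey y_iso {F G nF isoF nG isoG FG} => -[|[|m]] A h Hh y y_prim ey y_iso.
- by case: y_prim => -[].
- by case: (rank1_anisotropic Hh y_prim y_iso).
- exact: isotropic_flag Hh y_prim ey y_iso.
Qed.
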